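(* Let $A$ be a braided group in $\mathcal C$ and $B$ a braided group in $\mathcal{YD}(\mathcal C)^A_A$ with right $A$-action $\mu^B_r$ and coaction $\Delta^B_r$. Then the antipode of the cross product $A\rtimes B$ satisfies $S_{A\rtimes B}\circ S_{A\rtimes B}=(S_A^2\otimes S_B^2)\circ\Psi_{B,A}\circ\Psi_{A,B}\circ(A\otimes\sigma_{B/A})$, where $\sigma_{B/A}:=\mu^B_r\circ(B\otimes S_A)\circ\Delta^B_r$.
   Context: $\mathcal C$ is a braided monoidal category, assumed strict, with tensor product $\otimes$, unit $\underline 1$ and braiding $\Psi_{X,Y}:X\otimes Y\to Y\otimes X$. Inside tensor products of morphisms an object name $X$ stands for ${\rm id}_X$. A braided group in a braided category $(\mathcal D,\Phi)$ is a bialgebra $(A,\mu,\eta,\Delta,\epsilon)$ (with $\Delta\circ\mu=(\mu\otimes\mu)\circ(A\otimes\Phi_{A,A}\otimes A)\circ(\Delta\otimes\Delta)$ and unit/counit compatibilities) with antipode $S$. $\mathcal{YD}(\mathcal C)^A_A$ is the braided category of right crossed modules over $A$: right modules $\mu_r:X\otimes A\to X$ and comodules $\Delta_r:X\to X\otimes A$ with $(X\otimes\mu)\circ(\Psi_{A,X}\otimes A)\circ(A\otimes(\Delta_r\circ\mu_r))\circ(\Psi_{X,A}\otimes A)\circ(X\otimes\Delta)=(\mu_r\otimes\mu)\circ(X\otimes\Psi_{A,A}\otimes A)\circ(\Delta_r\otimes\Delta)$; tensor product action $(\mu^X_r\otimes\mu^Y_r)\circ(X\otimes\Psi_{Y,A}\otimes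 A)\circ(X\otimes Y\otimes\Delta)$, coaction $(X\otimes Y\otimes\mu)\circ(X\otimes\Psi_{A,Y}\otimes A)\circ(\Delta^X_r\otimes\Delta^Y_r)$; braiding $(Y\otimes\mu^X_r)\circ(\Psi_{X,Y}\otimes A)\circ(X\otimes\Delta^Y_r)$. The cross product $A\rtimes B$ is $A\otimes B$ with multiplication $(\mu_A\otimes\mu_B)\circ(A\otimes A\otimes\mu^B_r\otimes B)\circ(A\otimes\Psi_{B,A}\otimes A\otimes B)\circ(A\otimes B\otimes\Delta_A\otimes B)$, unit $\eta_A\otimes\eta_B$, comultiplication $(A\otimes B\otimes\mu_A\otimes B)\circ(A\otimes\Psi_{A,B}\otimes A\otimes B)\circ(A\otimes A\otimes\Delta^B_r\otimes B)\circ(\Delta_A\otimes\Delta_B)$, counit $\epsilon_A\otimes\epsilon_B$, and antipode $S_{A\rtimes B}=(A\otimes\mu^B_r)\circ(\Psi_{B,A}\otimes A)\circ(S_B\otimes(\Delta_A\circ S_A\circ\mu_A))\circ(\Psi_{A,B}\otimes A)\circ(A\otimes\Delta^B_r)$. *)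

(* A strict braided monoidal category is encoded with objects = words
   (lists) over a type of "generating" objects, tensor on objects = list
   concatenation and unit object = nil.  This makes strict associativity
   definitional on the concrete words occurring in the statement. *)
Set Implicit Arguments.
Unset Strict Implicit.
Open Scope list_scope.

(* transparent (computing) versions of the list lemmas *)
Definition app_assocT {T : Type} (l m n : list T) : l ++ (m ++ n) = (l ++ m) ++ n.
Proof.
  induction l as [|x l IH]; simpl.
  - exact eq_refl.
  - exact (f_equal (cons x) IH).
Defined.

Definition app_nil_rT {T : Type} (l : list T) : l ++ nil = l.
Proof.
  induction l as [|x l IH]; simpl.
  - exact eq_refl.
  - exact (f_equal (cons x) IH).
Defined.

Definition castH {O : Type} {Hm : list O -> list O -> Type} {x x' y y' : list O}
  (ex : x = x') (ey : y = y') (f : Hm x y) : Hm x' y' :=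
  match ex in _ = x0, ey in _ = y0 return Hm x0 y0 with
  | eq_refl, eq_refl => f
  end.

Record BraidedCat : Type := {
  Ob : Type;
  Hom : list Ob -> list Ob -> Type;
  comp : forall x y z, Hom y z -> Hom x y -> Hom x z;
  idm : forall x, Hom x x;
  tens : forall x y x' y', Hom x y -> Hom x' y' -> Hom (x ++ x') (y ++ y');
  braid : forall x y, Hom (x ++ y) (y ++ x);
  braid_inv : forall x y, Hom (y ++ x) (x ++ y);
  comp_assoc : forall x y z w (f : Hom x y) (g : Hom y z) (h : Hom z w),
      comp h (comp g f) = comp (comp h g) f;
  comp_id_l : forall x y (f : Hom x y), comp (idm y) f = f;
  comp_id_r : forall x y (f : Hom x y), comp f (idm x) = f;
  tens_comp : forall x y z x' y' z' (f : Hom y z) (f' : Hom x y)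
      (g : Hom y' z') (g' : Hom x' y'),
      comp (tens f g) (tens f' g') = tens (comp f f') (comp g g');
  tens_id : forall x y, tens (idm x) (idm y) = idm (x ++ y);
  tens_assoc : forall x y x' y' x'' y'' (f : Hom x y) (g : Hom x' y') (h : Hom x'' y''),
      castH (Hm := Hom) (app_assocT x x' x'') (app_assocT y y' y'') (tens f (tens g h))
      = tens (tens f g) h;
  tens_unit_l : forall x y (f : Hom x y), tens (idm nil) f = f;
  tens_unit_r : forall x y (f : Hom x y),
      castH (Hm := Hom) (app_nil_rT x) (app_nil_rT y) (tens f (idm nil)) = f;
  braid_nat : forall x y x' y' (f : Hom x y) (g : Hom x' y'),
      comp (braid y y') (tens f g) = comp (tens g f) (braid x x');
  braid_inv_l : forall x y, comp (braid_inv x y) (braid x y) = idm (x ++ y);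
  braid_inv_r : forall x y, comp (braid x y) (braid_inv x y) = idm (y ++ x);
  hexagon1 : forall x y z,
      braid x (y ++ z)
      = comp (castH (Hm := Hom) eq_refl (app_assocT y z x) (tens (idm y) (braid x z)))
             (castH (Hm := Hom) (eq_sym (app_assocT x y z)) (eq_sym (app_assocT y x z))
                    (tens (braid x y) (idm z)));
  hexagon2 : forall x y z,
      braid (x ++ y) z
      = comp (castH (Hm := Hom) eq_refl (eq_sym (app_assocT z x y)) (tens (braid x z) (idm y)))
             (castH (Hm := Hom) (app_assocT x y z) (app_assocT x z y)
                    (tens (idm x) (braid y z)))
}.

Arguments Hom {b} _ _.
Arguments comp {b x y z} _ _.
Arguments idm {b} _.
Arguments tens {b x y x' y'} _ _.
Arguments braid {b} _ _.
Arguments braid_inv {b} _ _.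

Notation "g ∘ f" := (comp g f) (at level 40, left associativity).
Notation "f ⊗ g" := (tens f g) (at level 30, right associativity).

Definition w {C : BraidedCat} (x : Ob C) : list (Ob C) := x :: nil.

Section Structures.
Variable C : BraidedCat.

(* A braided group (Hopf algebra with antipode) on the object x, in a
   braided category whose relevant braiding X⊗X -> X⊗X is Phi. *)
Definition is_braided_group_wrt (x : Ob C) (Phi : Hom (w x ++ w x) (w x ++ w x))
  (mu : Hom (w x ++ w x) (w x)) (eta : Hom nil (w x))
  (delta : Hom (w x) (w x ++ w x)) (eps : Hom (w x) nil) (S : Hom (w x) (w x)) : Prop :=
  let X := idm (w x) in
  mu ∘ (mu ⊗ X) = mu ∘ (X ⊗ mu) /\
  mu ∘ (eta ⊗ X) = X /\
  mu ∘ (X ⊗ eta) = X /\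
  (delta ⊗ X) ∘ delta = (X ⊗ delta) ∘ delta /\
  (eps ⊗ X) ∘ delta = X /\
  (X ⊗ eps) ∘ delta = X /\
  delta ∘ mu = (mu ⊗ mu) ∘ (X ⊗ Phi ⊗ X) ∘ (delta ⊗ delta) /\
  delta ∘ eta = eta ⊗ eta /\
  eps ∘ mu = eps ⊗ eps /\
  eps ∘ eta = idm nil /\
  mu ∘ (S ⊗ X) ∘ delta = eta ∘ eps /\
  mu ∘ (X ⊗ S) ∘ delta = eta ∘ eps.

Definition is_braided_group (a : Ob C) mu eta delta eps S : Prop :=
  is_braided_group_wrt (braid (w a) (w a)) mu eta delta eps S.

Section YD.
Variables (a : Ob C) (muA : Hom (w a ++ w a) (w a)) (etaA : Hom nil (w a))
          (deltaA : Hom (w a) (w a ++ w a)) (epsA : Hom (w a) nil).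

Definition is_YD_object (x : Ob C) (act : Hom (w x ++ w a) (w x))
  (coact : Hom (w x) (w x ++ w a)) : Prop :=
  let X := idm (w x) in let A := idm (w a) in
  act ∘ (act ⊗ A) = act ∘ (X ⊗ muA) /\
  act ∘ (X ⊗ etaA) = X /\
  (coact ⊗ A) ∘ coact = (X ⊗ deltaA) ∘ coact /\
  (X ⊗ epsA) ∘ coact = X /\
  (X ⊗ muA) ∘ (braid (w a) (w x) ⊗ A) ∘ (A ⊗ (coact ∘ act))
     ∘ (braid (w x) (w a) ⊗ A) ∘ (X ⊗ deltaA)
  = (act ⊗ muA) ∘ (X ⊗ braid (w a) (w a) ⊗ A) ∘ (coact ⊗ deltaA).

Variables (b : Ob C) (act : Hom (w b ++ w a) (w b)) (coact : Hom (w b) (w b ++ w a)).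

Definition actBB : Hom (w b ++ w b ++ w a) (w b ++ w b) :=
  (act ⊗ act) ∘ (idm (w b) ⊗ braid (w b) (w a) ⊗ idm (w a))
    ∘ (idm (w b) ⊗ idm (w b) ⊗ deltaA).
Definition coactBB : Hom (w b ++ w b) (w b ++ w b ++ w a) :=
  (idm (w b) ⊗ idm (w b) ⊗ muA) ∘ (idm (w b) ⊗ braid (w a) (w b) ⊗ idm (w a))
    ∘ (coact ⊗ coact).

Definition YD_braid_BB : Hom (w b ++ w b) (w b ++ w b) :=
  (idm (w b) ⊗ act) ∘ (braid (w b) (w b) ⊗ idm (w a)) ∘ (idm (w b) ⊗ coact).

(* B is a braided group in YD(C)^A_A: a YD object whose structure maps are
   morphisms of YD(C)^A_A (module and comodule maps; the unit object carries
   the trivial action epsA and coaction etaA) satisfying the braided group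
   axioms with respect to the braiding of YD(C)^A_A. *)
Definition is_braided_group_in_YD (muB : Hom (w b ++ w b) (w b)) (etaB : Hom nil (w b))
  (deltaB : Hom (w b) (w b ++ w b)) (epsB : Hom (w b) nil) (SB : Hom (w b) (w b)) : Prop :=
  let A := idm (w a) in
  is_YD_object act coact /\
  muB ∘ actBB = act ∘ (muB ⊗ A) /\ coact ∘ muB = (muB ⊗ A) ∘ coactBB /\
  etaB ∘ epsA = act ∘ (etaB ⊗ A) /\ coact ∘ etaB = etaB ⊗ etaA /\
  deltaB ∘ act = actBB ∘ (deltaB ⊗ A) /\ coactBB ∘ deltaB = (deltaB ⊗ A) ∘ coact /\
  epsB ∘ act = epsA ∘ (epsB ⊗ A) /\ etaA ∘ epsB = (epsB ⊗ A) ∘ coact /\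
  SB ∘ act = act ∘ (SB ⊗ A) /\ coact ∘ SB = (SB ⊗ A) ∘ coact /\
  is_braided_group_wrt YD_braid_BB muB etaB deltaB epsB SB.

Definition sigmaBA (SA : Hom (w a) (w a)) : Hom (w b) (w b) :=
  act ∘ (idm (w b) ⊗ SA) ∘ coact.

Definition cross_antipode (SA : Hom (w a) (w a)) (SB : Hom (w b) (w b))
  : Hom (w a ++ w b) (w a ++ w b) :=
  (idm (w a) ⊗ act) ∘ (braid (w b) (w a) ⊗ idm (w a))
    ∘ (SB ⊗ (deltaA ∘ SA ∘ muA)) ∘ (braid (w a) (w b) ⊗ idm (w a))
    ∘ (idm (w a) ⊗ coact).
End YD.
End Structures.

(* S_{A⋊B} is a composite of the structure maps of A and B, so both sides are
   string diagrams, and the identity is proved by a chain of local rewrites,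
   each an instance of an axiom, of the interchange law or of naturality of the
   braiding.  In Sweedler notation with braidings suppressed, T := S_B and
   x := S(a b¹), one has S(a ⊗ b) = x₁ ⊗ T(b⁰) ◁ x₂.  In S², the
   crossed-module condition moves the second coaction past the first action;
   antimultiplicativity and anticomultiplicativity of S and associativity of
   the action merge the two actions into a single action by x₁ S(x₂₁) S(d¹₁),
   where d := T(b⁰), and the antipode axiom cancels x₁ S(x₂₁).
   Antimultiplicativity then splits S(S(a b¹)), and the remaining coaction legs
   cancel by coassociativity, T being a comodule map, and the antipode axiom,
   leaving S²(a) ⊗ T²(b⁰ ◁ S(b¹)). *)

From Stdlib Require Import List Arith Bool ProofIrrelevance Eqdep_dec Lia.
Import ListNotations.
Open Scope list_scope.
Set Implicit Arguments.
Unset Strict Implicit.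

(** * String diagrams on words in two colours *)

Inductive wire : Type := WA | WB.

Definition word := list wire.

Inductive gen : Type :=
| GMul | GUnit | GComul | GCounit | GAnti | GBraid (x y : wire)
| GAct | GCoact | GAntiB.

Definition gen_dom (g : gen) : word :=
  match g with
  | GMul => [WA; WA] | GUnit => [] | GComul => [WA] | GCounit => [WA] | GAnti => [WA]
  | GBraid x y => [x; y] | GAct => [WB; WA] | GCoact => [WB] | GAntiB => [WB]
  end.

Definition gen_cod (g : gen) : word :=
  match g with
  | GMul => [WA] | GUnit => [WA] | GComul => [WA; WA] | GCounit => [] | GAnti => [WA]
  | GBraid x y => [y; x] | GAct => [WB] | GCoact => [WB; WA] | GAntiB => [WB]
  end.

Definition wire_eq_dec (x y : wire) : {x = y} + {x <> y}.
Proof. decide equality. Defined.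
Definition word_eq_dec (x y : word) : {x = y} + {x <> y}.
Proof. decide equality; apply wire_eq_dec. Defined.
Definition layer_eq_dec (l l' : nat * gen) : {l = l'} + {l <> l'}.
Proof. decide equality; [decide equality; apply wire_eq_dec | apply Nat.eq_dec]. Defined.

Definition dec_eqb {T : Type} (dec : forall x y : T, {x = y} + {x <> y}) (x y : T) : bool :=
  if dec x y then true else false.

Lemma dec_eqb_eq {T : Type} (dec : forall x y : T, {x = y} + {x <> y}) x y :
  dec_eqb dec x y = true -> x = y.
Proof. unfold dec_eqb; destruct (dec x y); [auto | discriminate]. Qed.

Lemma dec_eqb_refl {T : Type} (dec : forall x y : T, {x = y} + {x <> y}) x :
  dec_eqb dec x x = true.
Proof. unfold dec_eqb; destruct (dec x x); [reflexivity | contradiction]. Qed.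

(* A diagram on a word [x] is a list of layers [(k, g)], read bottom-up: the
   generator [g] acts on the wires [k, k + |dom g|) and all other wires pass
   through. *)
Definition layer := (nat * gen)%type.
Definition diagram := list layer.

Definition layer_ok (x : word) (l : layer) : bool :=
  let (k, g) := l in
  (k + length (gen_dom g) <=? length x)
  && dec_eqb word_eq_dec (firstn (length (gen_dom g)) (skipn k x)) (gen_dom g).

Definition layer_cod (x : word) (l : layer) : word :=
  let (k, g) := l in firstn k x ++ gen_cod g ++ skipn (k + length (gen_dom g)) x.

Fixpoint typed (x : word) (d : diagram) : bool :=
  match d with [] => true | l :: d => layer_ok x l && typed (layer_cod x l) d end.

Fixpoint diagram_cod (x : word) (d : diagram) : word :=
  match d with [] => x | l :: d => diagram_cod (layer_cod x l) d end.

Definition shift (n : nat) (d : diagram) : diagram :=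
  map (fun l => (fst l + n, snd l)) d.
Lemma shift0 d : shift 0 d = d.
Proof. induction d as [|[k g] d IH]; simpl; auto. rewrite Nat.add_0_r, IH; reflexivity. Qed.

Lemma layer_ok_split x k g :
  layer_ok x (k, g) = true -> x = firstn k x ++ gen_dom g ++ skipn (k + length (gen_dom g)) x.
Proof.
  simpl; intros H; apply andb_prop in H; destruct H as [_ H]; apply dec_eqb_eq in H.
  rewrite <- (firstn_skipn k x) at 1; f_equal.
  rewrite <- (firstn_skipn (length (gen_dom g)) (skipn k x)) at 1.
  rewrite H, skipn_skipn, Nat.add_comm; reflexivity.
Qed.

Lemma layer_ok_length x k g : layer_ok x (k, g) = true -> k + length (gen_dom g) <= length x.
Proof. simpl; intros H; apply andb_prop in H; destruct H as [H _]; apply Nat.leb_le, H. Qed.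

Lemma typed_app x d1 d2 : typed x (d1 ++ d2) = typed x d1 && typed (diagram_cod x d1) d2.
Proof.
  revert x; induction d1 as [|l d1 IH]; intros x; simpl; [reflexivity|].
  rewrite IH, andb_assoc; reflexivity.
Qed.

Lemma diagram_cod_app x d1 d2 : diagram_cod x (d1 ++ d2) = diagram_cod (diagram_cod x d1) d2.
Proof. revert x; induction d1 as [|l d1 IH]; intros x; simpl; auto. Qed.

Lemma firstn_in_context (L u R : word) k :
  k <= length u -> firstn (k + length L) (L ++ u ++ R) = L ++ firstn k u.
Proof.
  intros H. rewrite Nat.add_comm, firstn_app_2. f_equal. rewrite firstn_app.
  replace (k - length u) with 0 by lia. apply app_nil_r.
Qed.

Lemma skipn_in_context (L u R : word) k n :
  k + n <= length u -> skipn (k + length L + n) (L ++ u ++ R) = skipn (k + n) u ++ R.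
Proof.
  intros H. replace (k + length L + n) with (length L + (k + n)) by lia.
  rewrite skipn_app. replace (length L + (k + n) - length L) with (k + n) by lia.
  rewrite skipn_all2 by lia. simpl. rewrite skipn_app.
  replace (k + n - length u) with 0 by lia. reflexivity.
Qed.

Lemma layer_cod_in_context L u R k g : layer_ok u (k, g) = true ->
  layer_cod (L ++ u ++ R) (k + length L, g) = L ++ layer_cod u (k, g) ++ R.
Proof.
  intros H; pose proof (layer_ok_length H). simpl.
  rewrite firstn_in_context, skipn_in_context by lia. rewrite !app_assoc; reflexivity.
Qed.

Lemma layer_ok_in_context L u R k g : layer_ok u (k, g) = true ->
  layer_ok (L ++ u ++ R) (k + length L, g) = true.
Proof.
  intros H. pose proof (layer_ok_length H). simpl in H |- *.
  apply andb_prop in H; destruct H as [_ H]. apply andb_true_intro; split.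
  - apply Nat.leb_le. rewrite !length_app. lia.
  - replace (k + length L) with (length L + k) by lia. rewrite skipn_app.
    replace (length L + k - length L) with k by lia. rewrite skipn_all2 by lia.
    simpl. rewrite skipn_app, firstn_app.
    replace (length (gen_dom g) - length (skipn k u)) with 0 by (rewrite length_skipn; lia).
    simpl. rewrite app_nil_r. exact H.
Qed.

Lemma typed_in_context L R u p : typed u p = true ->
  typed (L ++ u ++ R) (shift (length L) p) = true.
Proof.
  revert u; induction p as [|[k g] p IH]; intros u H; [reflexivity|].
  cbn [typed shift map fst snd] in H |- *. apply andb_prop in H; destruct H as [H1 H2].
  rewrite layer_ok_in_context, layer_cod_in_context by auto. apply IH, H2.
Qed.

Lemma typed_in_context_r R u p : typed u p = true -> typed (u ++ R) p = true.
Proof. intros H. pose proof (typed_in_context [] R H) as E. rewrite shift0 in E. exact E. Qed.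

Lemma typed_in_context_l L u p : typed u p = true -> typed (L ++ u) (shift (length L) p) = true.
Proof. intros H. pose proof (typed_in_context L [] H) as E. rewrite app_nil_r in E. exact E. Qed.

Lemma diagram_cod_in_context L R u p : typed u p = true ->
  diagram_cod (L ++ u ++ R) (shift (length L) p) = L ++ diagram_cod u p ++ R.
Proof.
  revert u; induction p as [|[k g] p IH]; intros u H; [reflexivity|].
  cbn [typed shift map fst snd diagram_cod] in H |- *. apply andb_prop in H; destruct H as [H1 H2].
  rewrite layer_cod_in_context by auto. apply IH, H2.
Qed.

Lemma diagram_cod_in_context_r R u p : typed u p = true ->
  diagram_cod (u ++ R) p = diagram_cod u p ++ R.
Proof. intros H. pose proof (diagram_cod_in_context [] R H) as E. rewrite shift0 in E. exact E. Qed.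

Lemma diagram_cod_in_context_l L u p : typed u p = true ->
  diagram_cod (L ++ u) (shift (length L) p) = L ++ diagram_cod u p.
Proof.
  intros H. pose proof (diagram_cod_in_context L [] H) as E. rewrite !app_nil_r in E. exact E.
Qed.

(* The diagram [d] with its layers [i, i + |p|) replaced by [q] shifted [k]
   wires to the right, and the (decidable) conditions under which this is an
   instance of the local rule [p = q] on the word [u]. *)
Definition replace_block (d p q : diagram) (i k : nat) : diagram :=
  firstn i d ++ shift k q ++ skipn (i + length p) d.

Definition rewrite_ok (x : word) (d : diagram) (u : word) (p q : diagram) (i k : nat) : bool :=
  let y := diagram_cod x (firstn i d) in
  typed x d && typed x (replace_block d p q i k)
  && dec_eqb (list_eq_dec layer_eq_dec) (firstn (length p) (skipn i d)) (shift k p)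
  && (length p + i <=? length d)
  && (k + length u <=? length y) && dec_eqb word_eq_dec (firstn (length u) (skipn k y)) u
  && typed u p && typed u q.

Inductive expr : Type :=
| EGen (g : gen) | EId (x : word) | EComp (e1 e2 : expr) | ETens (e1 e2 : expr).

Fixpoint expr_dom (e : expr) : word :=
  match e with
  | EGen g => gen_dom g | EId x => x | EComp _ e2 => expr_dom e2
  | ETens e1 e2 => expr_dom e1 ++ expr_dom e2
  end.

Fixpoint expr_cod (e : expr) : word :=
  match e with
  | EGen g => gen_cod g | EId x => x | EComp e1 _ => expr_cod e1
  | ETens e1 e2 => expr_cod e1 ++ expr_cod e2
  end.

Fixpoint expr_typed (e : expr) : bool :=
  match e with
  | EGen _ | EId _ => true
  | EComp e1 e2 => expr_typed e1 && expr_typed e2 && dec_eqb word_eq_dec (expr_cod e2) (expr_dom e1)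
  | ETens e1 e2 => expr_typed e1 && expr_typed e2
  end.

Fixpoint layers (e : expr) : diagram :=
  match e with
  | EGen g => [(0, g)] | EId _ => []
  | EComp e1 e2 => layers e2 ++ layers e1
  | ETens e1 e2 => layers e1 ++ shift (length (expr_cod e1)) (layers e2)
  end.

Infix "⊙" := EComp (at level 40, left associativity).
Infix "⊠" := ETens (at level 30, right associativity).
Notation mulA := (EGen GMul).
Notation unitA := (EGen GUnit).
Notation comulA := (EGen GComul).
Notation counitA := (EGen GCounit).
Notation antiA := (EGen GAnti).
Notation actB := (EGen GAct).
Notation coactB := (EGen GCoact).
Notation antiB := (EGen GAntiB).
Notation brAA := (EGen (GBraid WA WA)).
Notation brAB := (EGen (GBraid WA WB)).
Notation brBA := (EGen (GBraid WB WA)).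
Notation idA := (EId [WA]).
Notation idB := (EId [WB]).

(* The braiding of a word of length at most two past one wire, as a composite
   of elementary braidings (hexagon axioms). *)
Definition braid_past_r (u : word) (z : wire) : expr :=
  match u with
  | [] => EId [z] | [x] => EGen (GBraid x z)
  | [x; y] => EGen (GBraid x z) ⊠ EId [y] ⊙ EId [x] ⊠ EGen (GBraid y z)
  | _ => EId []
  end.

Definition braid_past_l (z : wire) (u : word) : expr :=
  match u with
  | [] => EId [z] | [x] => EGen (GBraid z x)
  | [x; y] => EId [x] ⊠ EGen (GBraid z y) ⊙ EGen (GBraid z x) ⊠ EId [y]
  | _ => EId []
  end.

(** * Interpretation in the braided category *)

Section Interpretation.
Variable C : BraidedCat.
Variables (a b : Ob C).
Variables (muA : Hom (w a ++ w a) (w a)) (etaA : Hom nil (w a))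
  (deltaA : Hom (w a) (w a ++ w a)) (epsA : Hom (w a) nil) (SA : Hom (w a) (w a))
  (act : Hom (w b ++ w a) (w b)) (coact : Hom (w b) (w b ++ w a)) (SB : Hom (w b) (w b)).

Definition wire_ob (t : wire) : Ob C := match t with WA => a | WB => b end.

Fixpoint W (x : word) : list (Ob C) :=
  match x with nil => nil | t :: x => wire_ob t :: W x end.

Fixpoint W_app (x y : word) : W (x ++ y) = W x ++ W y :=
  match x return W (x ++ y) = W x ++ W y with
  | [] => eq_refl
  | t :: x => f_equal (cons (wire_ob t)) (W_app x y)
  end.

Definition gen_hom (g : gen) : Hom (W (gen_dom g)) (W (gen_cod g)) :=
  match g return Hom (W (gen_dom g)) (W (gen_cod g)) with
  | GMul => muA | GUnit => etaA | GComul => deltaA | GCounit => epsA | GAnti => SA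
  | GBraid x y => braid (W [x]) (W [y])
  | GAct => act | GCoact => coact | GAntiB => SB
  end.

Local Notation cast := (castH (Hm := Hom)).

Lemma cast_comp (x x' y y' z z' : list (Ob C)) (ex : x = x') (ey : y = y') (ez : z = z')
  (f : Hom y z) (g : Hom x y) : cast ey ez f ∘ cast ex ey g = cast ex ez (f ∘ g).
Proof. destruct ex, ey, ez; reflexivity. Qed.

Lemma cast_cast (x x' x'' y y' y'' : list (Ob C)) (e1 : x = x') (e2 : y = y')
  (e3 : x' = x'') (e4 : y' = y'') (f : Hom x y) :
  cast e3 e4 (cast e1 e2 f) = cast (eq_trans e1 e3) (eq_trans e2 e4) f.
Proof. destruct e1, e2, e3, e4; reflexivity. Qed.

Lemma cast_irrelevant (x x' y y' : list (Ob C)) (e1 e1' : x = x') (e2 e2' : y = y')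
  (f : Hom x y) : cast e1 e2 f = cast e1' e2' f.
Proof. rewrite (proof_irrelevance _ e1 e1'), (proof_irrelevance _ e2 e2'); reflexivity. Qed.

Lemma cast_idm (x x' : list (Ob C)) (e : x = x') : cast e e (idm x) = idm x'.
Proof. destruct e; reflexivity. Qed.

Lemma tens_cast_r (x y x' y' x'' y'' : list (Ob C)) (e1 : x' = x'') (e2 : y' = y'')
  (f : Hom x y) (g : Hom x' y') :
  f ⊗ cast e1 e2 g = cast (f_equal (app x) e1) (f_equal (app y) e2) (f ⊗ g).
Proof. destruct e1, e2; reflexivity. Qed.

Lemma tens_cast_l (x y x' y' x'' y'' : list (Ob C)) (e1 : x = x'') (e2 : y = y'')
  (f : Hom x y) (g : Hom x' y') :
  cast e1 e2 f ⊗ g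
  = cast (f_equal (fun l => l ++ x') e1) (f_equal (fun l => l ++ y') e2) (f ⊗ g).
Proof. destruct e1, e2; reflexivity. Qed.

(* Morphisms between words, packed with their source and target so that
   composition and tensor become total operations. *)
Record arrow := Arrow { src : word; tgt : word; hom : Hom (W src) (W tgt) }.

Definition id_arrow (x : word) : arrow := @Arrow x x (idm (W x)).
Definition gen_arrow (g : gen) : arrow := @Arrow (gen_dom g) (gen_cod g) (gen_hom g).

(* Composing non-matching arrows returns the first factor (a junk value). *)
Definition arrow_comp (f g : arrow) : arrow :=
  match word_eq_dec (tgt g) (src f) with
  | left e => @Arrow (src g) (tgt f) (hom f ∘ cast eq_refl (f_equal W e) (hom g))
  | right _ => g
  end.

Definition arrow_tens (f g : arrow) : arrow :=
  @Arrow (src f ++ src g) (tgt f ++ tgt g)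
    (cast (eq_sym (W_app _ _)) (eq_sym (W_app _ _)) (hom f ⊗ hom g)).

Lemma Arrow_cast (x y x' y' : word) (ex : x = x') (ey : y = y')
  (f : Hom (W x) (W y)) (g : Hom (W x') (W y')) :
  cast (f_equal W ex) (f_equal W ey) f = g -> Arrow f = Arrow g.
Proof. destruct ex, ey; simpl; intros ->; reflexivity. Qed.

Lemma Arrow_inj x y (f g : Hom (W x) (W y)) : Arrow f = Arrow g -> f = g.
Proof.
  intros E.
  assert (E' : existT (fun p : word * word => Hom (W (fst p)) (W (snd p))) (x, y) f
               = existT _ (x, y) g)
    by exact (f_equal (fun m => existT (fun p : word * word => Hom (W (fst p)) (W (snd p)))
                                       (src m, tgt m) (hom m)) E).
  apply inj_pair2_eq_dec in E'; [exact E'|].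
  intros p1 p2; decide equality; apply word_eq_dec.
Qed.

Lemma arrow_comp_Arrow x y z (f : Hom (W y) (W z)) (g : Hom (W x) (W y)) :
  arrow_comp (Arrow f) (Arrow g) = Arrow (f ∘ g).
Proof.
  unfold arrow_comp; simpl. destruct (word_eq_dec y y) as [e|n]; [|congruence].
  rewrite (UIP_dec word_eq_dec e eq_refl). reflexivity.
Qed.

Lemma arrow_comp_src f g : src (arrow_comp f g) = src g.
Proof. unfold arrow_comp; destruct (word_eq_dec (tgt g) (src f)); reflexivity. Qed.

Lemma arrow_comp_tgt f g : tgt g = src f -> tgt (arrow_comp f g) = tgt f.
Proof. unfold arrow_comp; destruct (word_eq_dec (tgt g) (src f)); [reflexivity | congruence]. Qed.

Lemma arrow_comp_assoc (f g h : arrow) : tgt h = src g -> tgt g = src f ->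
  arrow_comp f (arrow_comp g h) = arrow_comp (arrow_comp f g) h.
Proof.
  destruct f as [y' z f], g as [x' y g], h as [v x h]; simpl; intros E1 E2; subst.
  rewrite !arrow_comp_Arrow, comp_assoc; reflexivity.
Qed.

Lemma arrow_comp_id_l (f : arrow) y : tgt f = y -> arrow_comp (id_arrow y) f = f.
Proof.
  destruct f as [x y' f]; simpl; intros E; subst.
  unfold id_arrow; rewrite arrow_comp_Arrow, comp_id_l; reflexivity.
Qed.

Lemma arrow_comp_id_r (f : arrow) x : src f = x -> arrow_comp f (id_arrow x) = f.
Proof.
  destruct f as [x' y f]; simpl; intros E; subst.
  unfold id_arrow; rewrite arrow_comp_Arrow, comp_id_r; reflexivity.
Qed.

Lemma arrow_tens_comp (f f' g g' : arrow) : tgt g = src f -> tgt g' = src f' ->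
  arrow_comp (arrow_tens f f') (arrow_tens g g') = arrow_tens (arrow_comp f g) (arrow_comp f' g').
Proof.
  destruct f as [y z f], g as [x y1 g], f' as [y' z' f'], g' as [x' y1' g'];
  simpl; intros E1 E2; subst.
  unfold arrow_tens; simpl; rewrite !arrow_comp_Arrow, cast_comp, tens_comp; reflexivity.
Qed.

Lemma arrow_tens_id x y : arrow_tens (id_arrow x) (id_arrow y) = id_arrow (x ++ y).
Proof. unfold arrow_tens, id_arrow; simpl; rewrite tens_id, cast_idm; reflexivity. Qed.

Lemma arrow_tens_assoc (f g h : arrow) :
  arrow_tens f (arrow_tens g h) = arrow_tens (arrow_tens f g) h.
Proof.
  destruct f as [x y f], g as [x' y' g], h as [x'' y'' h]; unfold arrow_tens; simpl.
  apply (Arrow_cast (ex := app_assoc x x' x'') (ey := app_assoc y y' y'')).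
  rewrite tens_cast_r, tens_cast_l, !cast_cast.
  rewrite <- (@tens_assoc C _ _ _ _ _ _ f g h); rewrite !cast_cast.
  apply cast_irrelevant.
Qed.

Lemma arrow_tens_unit_l (f : arrow) : arrow_tens (id_arrow []) f = f.
Proof.
  destruct f as [x y f]; unfold arrow_tens, id_arrow; simpl; rewrite tens_unit_l; reflexivity.
Qed.

Lemma arrow_tens_unit_r (f : arrow) : arrow_tens f (id_arrow []) = f.
Proof.
  destruct f as [x y f]; unfold arrow_tens, id_arrow; simpl.
  apply (Arrow_cast (ex := app_nil_r x) (ey := app_nil_r y)).
  rewrite cast_cast. rewrite <- (@tens_unit_r C _ _ f) at 2. apply cast_irrelevant.
Qed.

Definition layer_arrow (x : word) (l : layer) : arrow :=
  let (k, g) := l in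
  arrow_tens (id_arrow (firstn k x))
    (arrow_tens (gen_arrow g) (id_arrow (skipn (k + length (gen_dom g)) x))).

Fixpoint run (x : word) (d : diagram) : arrow :=
  match d with
  | [] => id_arrow x
  | l :: d => arrow_comp (run (layer_cod x l) d) (layer_arrow x l)
  end.

Lemma run_src x d : typed x d = true -> src (run x d) = x.
Proof.
  destruct d as [|[k g] d]; [reflexivity|].
  simpl; intros H; apply andb_prop in H; destruct H as [H _].
  rewrite arrow_comp_src; simpl. symmetry; exact (layer_ok_split H).
Qed.

Lemma run_tgt x d : typed x d = true -> tgt (run x d) = diagram_cod x d.
Proof.
  revert x; induction d as [|l d IH]; intros x; [reflexivity|].
  simpl; intros H; apply andb_prop in H; destruct H as [H1 H2].
  rewrite arrow_comp_tgt; [apply IH, H2|]. rewrite run_src by exact H2. destruct l; reflexivity.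
Qed.

Lemma run_app x d1 d2 : typed x (d1 ++ d2) = true ->
  run x (d1 ++ d2) = arrow_comp (run (diagram_cod x d1) d2) (run x d1).
Proof.
  revert x; induction d1 as [|l d1 IH]; intros x H.
  - simpl. rewrite arrow_comp_id_r; [reflexivity|]. apply run_src, H.
  - simpl in H |- *. apply andb_prop in H; destruct H as [H1 H2].
    rewrite typed_app in H2; apply andb_prop in H2; destruct H2 as [H2 H3].
    rewrite IH by (rewrite typed_app, H2, H3; reflexivity).
    rewrite arrow_comp_assoc; [reflexivity | |].
    + rewrite run_src by exact H2. destruct l; reflexivity.
    + rewrite run_src, run_tgt; auto.
Qed.

Lemma layer_arrow_in_context L u R k g : layer_ok u (k, g) = true ->
  layer_arrow (L ++ u ++ R) (k + length L, g)
  = arrow_tens (id_arrow L) (arrow_tens (layer_arrow u (k, g)) (id_arrow R)).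
Proof.
  intros H; pose proof (layer_ok_length H). simpl.
  rewrite firstn_in_context, skipn_in_context by lia.
  rewrite <- !arrow_tens_id, !arrow_tens_assoc; reflexivity.
Qed.

Lemma run_in_context L R u p : typed u p = true ->
  run (L ++ u ++ R) (shift (length L) p)
  = arrow_tens (id_arrow L) (arrow_tens (run u p) (id_arrow R)).
Proof.
  revert u; induction p as [|[k g] p IH]; intros u H.
  - simpl. rewrite !arrow_tens_id; reflexivity.
  - cbn [typed run shift map fst snd] in H |- *. apply andb_prop in H; destruct H as [H1 H2].
    rewrite layer_cod_in_context, IH, layer_arrow_in_context by auto.
    assert (Hs : src (run (layer_cod u (k, g)) p) = layer_cod u (k, g)) by (apply run_src, H2).
    rewrite !arrow_tens_comp; try reflexivity; try exact Hs.
    rewrite !arrow_comp_id_l by reflexivity; reflexivity.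
    all: cbn [arrow_tens src tgt]; try apply (f_equal (fun l => l ++ R)); symmetry; exact Hs.
Qed.

Lemma run_in_context_r R u p : typed u p = true ->
  run (u ++ R) p = arrow_tens (run u p) (id_arrow R).
Proof.
  intros H. pose proof (run_in_context [] R H) as E.
  rewrite shift0, arrow_tens_unit_l in E. exact E.
Qed.

Lemma run_in_context_l L u p : typed u p = true ->
  run (L ++ u) (shift (length L) p) = arrow_tens (id_arrow L) (run u p).
Proof.
  intros H. pose proof (run_in_context L [] H) as E.
  rewrite app_nil_r, arrow_tens_unit_r in E. exact E.
Qed.

Lemma run_app3 x d1 d2 d3 : typed x (d1 ++ d2 ++ d3) = true ->
  run x (d1 ++ d2 ++ d3)
  = arrow_comp (run (diagram_cod (diagram_cod x d1) d2) d3)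
      (arrow_comp (run (diagram_cod x d1) d2) (run x d1)).
Proof.
  intros H. rewrite run_app by exact H.
  rewrite typed_app in H; apply andb_prop in H; destruct H as [H1 H2].
  rewrite run_app by exact H2.
  rewrite typed_app in H2; apply andb_prop in H2; destruct H2 as [H2 H3].
  rewrite arrow_comp_assoc; [reflexivity | |]; rewrite ?run_src, ?run_tgt; auto.
Qed.

Lemma run_rewrite_block x pre post y u p q k :
  typed x (pre ++ shift k p ++ post) = true -> typed x (pre ++ shift k q ++ post) = true ->
  diagram_cod x pre = y -> k + length u <= length y -> firstn (length u) (skipn k y) = u ->
  typed u p = true -> typed u q = true -> run u p = run u q ->
  run x (pre ++ shift k p ++ post) = run x (pre ++ shift k q ++ post).
Proof.
  intros Tp Tq Hy Hk Hu Wp Wq H.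
  rewrite !run_app3 by assumption. rewrite Hy.
  assert (Ey : y = firstn k y ++ u ++ skipn (k + length u) y).
  { rewrite <- (firstn_skipn k y) at 1. f_equal.
    rewrite <- (firstn_skipn (length u) (skipn k y)) at 1.
    rewrite Hu, skipn_skipn, Nat.add_comm; reflexivity. }
  assert (Hl : length (firstn k y) = k) by (rewrite length_firstn; lia).
  revert Ey Hl. generalize (firstn k y) (skipn (k + length u) y).
  intros L R Ey Hl. subst k. rewrite Ey.
  assert (Hr : run (L ++ u ++ R) (shift (length L) p) = run (L ++ u ++ R) (shift (length L) q))
    by (rewrite !run_in_context, H by assumption; reflexivity).
  assert (Hc : diagram_cod (L ++ u ++ R) (shift (length L) p)
               = diagram_cod (L ++ u ++ R) (shift (length L) q))
    by (rewrite <- !run_tgt by (apply typed_in_context; assumption); rewrite Hr; reflexivity).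
  rewrite Hr, Hc. reflexivity.
Qed.

Lemma run_rewrite x d e u p q i k : run u p = run u q ->
  rewrite_ok x d u p q i k = true -> run x (replace_block d p q i k) = run x e -> run x d = run x e.
Proof.
  unfold rewrite_ok; intros H Hc E. rewrite <- E.
  repeat match type of Hc with
  | (_ && _) = true => apply andb_prop in Hc; destruct Hc as [Hc ?]
  end.
  repeat match goal with
  | h : dec_eqb _ _ _ = true |- _ => apply dec_eqb_eq in h
  | h : (_ <=? _) = true |- _ => apply Nat.leb_le in h
  end.
  assert (Ed : d = firstn i d ++ shift k p ++ skipn (i + length p) d).
  { match goal with h : firstn (length p) (skipn i d) = shift k p |- _ => rewrite <- h end.
    rewrite app_assoc, <- (firstn_skipn i d) at 1. rewrite <- app_assoc. f_equal.
    rewrite <- (firstn_skipn (length p) (skipn i d)) at 1.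
    rewrite skipn_skipn, Nat.add_comm; reflexivity. }
  unfold replace_block in *. rewrite Ed at 1. rewrite Ed in Hc.
  eapply run_rewrite_block; eauto.
Qed.

Fixpoint eval (e : expr) : arrow :=
  match e with
  | EGen g => gen_arrow g | EId x => id_arrow x
  | EComp e1 e2 => arrow_comp (eval e1) (eval e2)
  | ETens e1 e2 => arrow_tens (eval e1) (eval e2)
  end.

Lemma layers_correct e : expr_typed e = true ->
  typed (expr_dom e) (layers e) = true /\ diagram_cod (expr_dom e) (layers e) = expr_cod e
  /\ run (expr_dom e) (layers e) = eval e.
Proof.
  induction e as [g|x|e1 IH1 e2 IH2|e1 IH1 e2 IH2]; intros H.
  - simpl. rewrite Nat.leb_refl, skipn_all, firstn_all, dec_eqb_refl, app_nil_r; simpl.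
    split; [reflexivity|]. split; [reflexivity|].
    unfold id_arrow at 2; simpl; fold (id_arrow []).
    rewrite arrow_tens_unit_l, arrow_tens_unit_r. apply arrow_comp_id_l; reflexivity.
  - simpl. auto.
  - simpl in H. apply andb_prop in H; destruct H as [H H3].
    apply andb_prop in H; destruct H as [H1 H2]. apply dec_eqb_eq in H3.
    destruct (IH1 H1) as [A1 [B1 C1]]. destruct (IH2 H2) as [A2 [B2 C2]].
    simpl. rewrite typed_app, diagram_cod_app, A2, B2, H3, A1, B1.
    split; [reflexivity|]. split; [reflexivity|].
    rewrite run_app by (rewrite typed_app, A2, B2, H3, A1; reflexivity).
    rewrite B2, H3, C1, C2. reflexivity.
  - simpl in H. apply andb_prop in H; destruct H as [H1 H2].
    destruct (IH1 H1) as [A1 [B1 C1]]. destruct (IH2 H2) as [A2 [B2 C2]].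
    pose proof (typed_in_context_r (expr_dom e2) A1) as T1.
    pose proof (diagram_cod_in_context_r (expr_dom e2) A1) as D1.
    pose proof (typed_in_context_l (expr_cod e1) A2) as T2.
    simpl. rewrite typed_app, diagram_cod_app, T1, D1, B1, T2, (diagram_cod_in_context_l _ A2), B2.
    split; [reflexivity|]. split; [reflexivity|].
    rewrite run_app by (rewrite typed_app, T1, D1, B1, T2; reflexivity).
    rewrite D1, B1, (run_in_context_r _ A1), (run_in_context_l _ A2), C1, C2.
    assert (tgt (eval e1) = expr_cod e1) by (rewrite <- C1, run_tgt; auto).
    assert (src (eval e2) = expr_dom e2) by (rewrite <- C2, run_src; auto).
    rewrite arrow_tens_comp, arrow_comp_id_l, arrow_comp_id_r; auto.
Qed.

Definition diagram_eq (x : word) (e1 e2 : expr) : Prop := run x (layers e1) = run x (layers e2).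

Lemma eval_eq_of_diagram_eq x e1 e2 : expr_typed e1 = true -> expr_typed e2 = true ->
  expr_dom e1 = x -> expr_dom e2 = x -> diagram_eq x e1 e2 -> eval e1 = eval e2.
Proof.
  intros H1 H2 E1 E2 V. subst x.
  destruct (layers_correct H1) as [_ [_ R1]]. destruct (layers_correct H2) as [_ [_ R2]].
  rewrite <- R1, <- R2, E2. exact V.
Qed.

Lemma run_layers_eq x e1 e2 : expr_typed e1 = true -> expr_typed e2 = true ->
  expr_dom e1 = x -> expr_dom e2 = x -> eval e1 = eval e2 -> diagram_eq x e1 e2.
Proof.
  intros H1 H2 E1 E V. subst x. unfold diagram_eq.
  destruct (layers_correct H1) as [_ [_ R1]]. destruct (layers_correct H2) as [_ [_ R2]].
  rewrite R1, <- E, R2. exact V.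
Qed.

Lemma interchange g1 g2 m : diagram_eq (gen_dom g1 ++ m ++ gen_dom g2)
  (EId (gen_cod g1) ⊠ EId m ⊠ EGen g2 ⊙ EGen g1 ⊠ EId (m ++ gen_dom g2))
  (EGen g1 ⊠ EId (m ++ gen_cod g2) ⊙ EId (gen_dom g1) ⊠ EId m ⊠ EGen g2).
Proof.
  apply run_layers_eq; simpl; rewrite ?dec_eqb_refl; try reflexivity.
  rewrite !arrow_tens_comp, !arrow_comp_id_l, !arrow_comp_id_r by reflexivity. reflexivity.
Qed.

Definition braid_arrow (u v : word) : arrow :=
  @Arrow (u ++ v) (v ++ u) (cast (eq_sym (W_app u v)) (eq_sym (W_app v u)) (braid (W u) (W v))).

Lemma braid_nil_l (o : Ob C) : braid [] [o] = idm [o].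
Proof.
  pose proof (@hexagon2 C [] [] [o]) as E.
  pose proof (@tens_unit_r C _ _ (braid [] [o])) as U.
  cbv [castH app_nil_rT app_assocT list_rect list_ind f_equal eq_sym app] in E, U.
  rewrite U, (@tens_unit_l C) in E.
  pose proof (@braid_inv_l C [] [o]) as Hi. cbv [app] in Hi.
  rewrite <- Hi. rewrite E at 2. rewrite comp_assoc, Hi, comp_id_l. reflexivity.
Qed.

Lemma braid_nil_r (o : Ob C) : braid [o] [] = idm [o].
Proof.
  pose proof (@hexagon1 C [o] [] []) as E.
  pose proof (@tens_unit_r C _ _ (braid [o] [])) as U.
  cbv [castH app_nil_rT app_assocT list_rect list_ind f_equal eq_sym app] in E, U.
  rewrite U, (@tens_unit_l C) in E.
  pose proof (@braid_inv_l C [o] []) as Hi. cbv [app] in Hi.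
  rewrite <- Hi. rewrite E at 2. rewrite comp_assoc, Hi, comp_id_l. reflexivity.
Qed.

Lemma eval_braid_past_r u z : length u <= 2 -> eval (braid_past_r u z) = braid_arrow u [z].
Proof.
  intros Hu; destruct u as [|x [|y [|? ?]]]; simpl in Hu; try lia.
  - unfold braid_arrow; simpl. rewrite braid_nil_l. reflexivity.
  - reflexivity.
  - destruct x, y, z;
      exact (f_equal (@Arrow [_; _; _] [_; _; _])
               (eq_sym (@hexagon2 C [wire_ob _] [wire_ob _] [wire_ob _]))).
Qed.

Lemma eval_braid_past_l z u : length u <= 2 -> eval (braid_past_l z u) = braid_arrow [z] u.
Proof.
  intros Hu; destruct u as [|x [|y [|? ?]]]; simpl in Hu; try lia.
  - unfold braid_arrow; simpl. rewrite braid_nil_r. reflexivity.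
  - reflexivity.
  - destruct x, y, z;
      exact (f_equal (@Arrow [_; _; _] [_; _; _])
               (eq_sym (@hexagon1 C [wire_ob _] [wire_ob _] [wire_ob _]))).
Qed.

Lemma braid_natural_r g z : diagram_eq (gen_dom g ++ [z])
  (braid_past_r (gen_cod g) z ⊙ EGen g ⊠ EId [z])
  (EId [z] ⊠ EGen g ⊙ braid_past_r (gen_dom g) z).
Proof.
  apply run_layers_eq.
  1-4: destruct g; try destruct x; try destruct y; destruct z; reflexivity.
  cbn [eval]. rewrite !eval_braid_past_r by (destruct g; simpl; lia).
  unfold braid_arrow, gen_arrow, id_arrow, arrow_tens; cbn [src tgt hom].
  rewrite !arrow_comp_Arrow, !cast_comp, braid_nat. reflexivity.
Qed.

Lemma braid_natural_l g z : diagram_eq ([z] ++ gen_dom g)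
  (braid_past_l z (gen_cod g) ⊙ EId [z] ⊠ EGen g)
  (EGen g ⊠ EId [z] ⊙ braid_past_l z (gen_dom g)).
Proof.
  apply run_layers_eq.
  1-4: destruct g; try destruct x; try destruct y; destruct z; reflexivity.
  cbn [eval]. rewrite !eval_braid_past_l by (destruct g; simpl; lia).
  unfold braid_arrow, gen_arrow, id_arrow, arrow_tens; cbn [src tgt hom].
  rewrite !arrow_comp_Arrow, !cast_comp, braid_nat. reflexivity.
Qed.

(** * Braided group identities as diagram rules *)

Hypothesis Hmul_assoc : muA ∘ (muA ⊗ idm (w a)) = muA ∘ (idm (w a) ⊗ muA).
Hypothesis Hmul_unit_l : muA ∘ (etaA ⊗ idm (w a)) = idm (w a).
Hypothesis Hmul_unit_r : muA ∘ (idm (w a) ⊗ etaA) = idm (w a).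
Hypothesis Hcomul_coassoc : (deltaA ⊗ idm (w a)) ∘ deltaA = (idm (w a) ⊗ deltaA) ∘ deltaA.
Hypothesis Hcomul_counit_l : (epsA ⊗ idm (w a)) ∘ deltaA = idm (w a).
Hypothesis Hcomul_counit_r : (idm (w a) ⊗ epsA) ∘ deltaA = idm (w a).
Hypothesis Hcomul_mul : deltaA ∘ muA
  = (muA ⊗ muA) ∘ (idm (w a) ⊗ braid (w a) (w a) ⊗ idm (w a)) ∘ (deltaA ⊗ deltaA).
Hypothesis Hcomul_unit : deltaA ∘ etaA = etaA ⊗ etaA.
Hypothesis Hcounit_mul : epsA ∘ muA = epsA ⊗ epsA.
Hypothesis Hcounit_unit : epsA ∘ etaA = idm nil.
Hypothesis Hantipode_l : muA ∘ (SA ⊗ idm (w a)) ∘ deltaA = etaA ∘ epsA.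
Hypothesis Hantipode_r : muA ∘ (idm (w a) ⊗ SA) ∘ deltaA = etaA ∘ epsA.
Hypothesis Hact_mul : act ∘ (act ⊗ idm (w a)) = act ∘ (idm (w b) ⊗ muA).
Hypothesis Hcoact_coassoc : (coact ⊗ idm (w a)) ∘ coact = (idm (w b) ⊗ deltaA) ∘ coact.
Hypothesis Hcrossed : (idm (w b) ⊗ muA) ∘ (braid (w a) (w b) ⊗ idm (w a))
    ∘ (idm (w a) ⊗ (coact ∘ act)) ∘ (braid (w b) (w a) ⊗ idm (w a)) ∘ (idm (w b) ⊗ deltaA)
  = (act ⊗ muA) ∘ (idm (w b) ⊗ braid (w a) (w a) ⊗ idm (w a)) ∘ (coact ⊗ deltaA).
Hypothesis HantiB_act : SB ∘ act = act ∘ (SB ⊗ idm (w a)).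
Hypothesis HantiB_coact : coact ∘ SB = (SB ⊗ idm (w a)) ∘ coact.

Ltac from_axiom H :=
  apply run_layers_eq; [reflexivity .. |];
  match goal with |- eval ?e = _ => exact (f_equal (@Arrow (expr_dom e) (expr_cod e)) H) end.

(* [rw_at H i k]: rewrite with the local rule [H], matched against the layers
   [i, i + |lhs|) of the goal diagram, placed [k] wires from the left. *)
Ltac rw_at H i k :=
  apply (run_rewrite (i := i) (k := k) H); [vm_compute; reflexivity | cbv -[run]].

Lemma mul_assoc : diagram_eq [WA; WA; WA] (mulA ⊙ mulA ⊠ idA) (mulA ⊙ idA ⊠ mulA).
Proof. from_axiom Hmul_assoc. Qed.

Lemma mul_unit_l : diagram_eq [WA] (mulA ⊙ unitA ⊠ idA) idA.
Proof. from_axiom Hmul_unit_l. Qed.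

Lemma mul_unit_r : diagram_eq [WA] (mulA ⊙ idA ⊠ unitA) idA.
Proof. from_axiom Hmul_unit_r. Qed.

Lemma comul_coassoc : diagram_eq [WA] (comulA ⊠ idA ⊙ comulA) (idA ⊠ comulA ⊙ comulA).
Proof. from_axiom Hcomul_coassoc. Qed.

Lemma comul_counit_l : diagram_eq [WA] (counitA ⊠ idA ⊙ comulA) idA.
Proof. from_axiom Hcomul_counit_l. Qed.

Lemma comul_counit_r : diagram_eq [WA] (idA ⊠ counitA ⊙ comulA) idA.
Proof. from_axiom Hcomul_counit_r. Qed.

Lemma comul_mul : diagram_eq [WA; WA]
  (comulA ⊙ mulA)
  (mulA ⊠ mulA ⊙ idA ⊠ brAA ⊠ idA ⊙ comulA ⊠ comulA).
Proof. from_axiom Hcomul_mul. Qed.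

Lemma comul_unit : diagram_eq [] (comulA ⊙ unitA) (unitA ⊠ unitA).
Proof. from_axiom Hcomul_unit. Qed.

Lemma counit_mul : diagram_eq [WA; WA] (counitA ⊙ mulA) (counitA ⊠ counitA).
Proof. from_axiom Hcounit_mul. Qed.

Lemma counit_unit : diagram_eq [] (counitA ⊙ unitA) (EId []).
Proof. from_axiom Hcounit_unit. Qed.

Lemma antipode_l : diagram_eq [WA] (mulA ⊙ antiA ⊠ idA ⊙ comulA) (unitA ⊙ counitA).
Proof. from_axiom Hantipode_l. Qed.

Lemma antipode_r : diagram_eq [WA] (mulA ⊙ idA ⊠ antiA ⊙ comulA) (unitA ⊙ counitA).
Proof. from_axiom Hantipode_r. Qed.

Lemma act_mul : diagram_eq [WB; WA; WA] (actB ⊙ actB ⊠ idA) (actB ⊙ idB ⊠ mulA).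
Proof. from_axiom Hact_mul. Qed.

Lemma coact_coassoc : diagram_eq [WB] (coactB ⊠ idA ⊙ coactB) (idB ⊠ comulA ⊙ coactB).
Proof. from_axiom Hcoact_coassoc. Qed.

Lemma crossed_module_compat : diagram_eq [WB; WA]
  (idB ⊠ mulA ⊙ brAB ⊠ idA ⊙ idA ⊠ (coactB ⊙ actB) ⊙ brBA ⊠ idA ⊙ idB ⊠ comulA)
  (actB ⊠ mulA ⊙ idB ⊠ brAA ⊠ idA ⊙ coactB ⊠ comulA).
Proof. from_axiom Hcrossed. Qed.

Lemma antiB_act : diagram_eq [WB; WA] (antiB ⊙ actB) (actB ⊙ antiB ⊠ idA).
Proof. from_axiom HantiB_act. Qed.

Lemma antiB_coact : diagram_eq [WB] (coactB ⊙ antiB) (antiB ⊠ idA ⊙ coactB).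
Proof. from_axiom HantiB_coact. Qed.

(* The algebra and coalgebra structures of the braided tensor square A ⊗ A,
   convolution of maps A ⊗ A → A and of maps A → A ⊗ A, and the expected
   values of S ∘ μ and Δ ∘ S. *)
Definition mulAA : expr := mulA ⊠ mulA ⊙ idA ⊠ brAA ⊠ idA.
Definition comulAA : expr := idA ⊠ brAA ⊠ idA ⊙ comulA ⊠ comulA.
Definition conv (f g : expr) : expr := mulA ⊙ f ⊠ g ⊙ comulAA.
Definition coconv (f g : expr) : expr := mulAA ⊙ f ⊠ g ⊙ comulA.
Definition anti_rev : expr := mulA ⊙ antiA ⊠ antiA ⊙ brAA.
Definition coanti_rev : expr := brAA ⊙ antiA ⊠ antiA ⊙ comulA.

Lemma anti_unit : diagram_eq []
  (antiA ⊙ unitA)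
  unitA.
Proof.
  unfold diagram_eq; cbv -[run].
  rw_at (eq_sym mul_unit_r) 2 0.
  rw_at (interchange GAnti GUnit []) 1 0.
  rw_at (eq_sym comul_unit) 0 0.
  rw_at antipode_l 1 0.
  rw_at counit_unit 0 0.
  reflexivity.
Qed.

Lemma anti_mul_conv_mul : diagram_eq [WA; WA]
  (conv (antiA ⊙ mulA) mulA) (unitA ⊙ counitA ⊠ counitA).
Proof.
  unfold diagram_eq; cbv -[run].
  rw_at (interchange GAnti GMul []) 4 0.
  rw_at (eq_sym comul_mul) 0 0.
  rw_at antipode_l 1 0.
  rw_at counit_mul 0 0.
  reflexivity.
Qed.

Lemma mul_conv_anti_rev : diagram_eq [WA; WA]
  (conv mulA anti_rev) (unitA ⊙ counitA ⊠ counitA).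
Proof.
  unfold diagram_eq; cbv -[run].
  rw_at (eq_sym mul_assoc) 7 0.
  rw_at (interchange GMul (GBraid WA WA) []) 3 0.
  rw_at (interchange GMul GAnti []) 4 0.
  rw_at (interchange GMul GAnti [WA]) 5 0.
  rw_at mul_assoc 6 0.
  rw_at (braid_natural_l GComul WA) 1 1.
  rw_at (interchange GAnti GAnti []) 3 2.
  rw_at (interchange GComul GAnti []) 2 1.
  rw_at antipode_r 3 1.
  rw_at (eq_sym (interchange GCounit GAnti [])) 2 1.
  rw_at (eq_sym (braid_natural_l GCounit WA)) 1 1.
  rw_at mul_unit_r 3 0.
  rw_at (interchange GComul GCounit []) 0 0.
  rw_at antipode_r 1 0.
  rw_at (eq_sym (interchange GCounit GCounit [])) 0 0.
  reflexivity.
Qed.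

Lemma anti_mul_expand : diagram_eq [WA; WA] (antiA ⊙ mulA)
  (mulA ⊙ (antiA ⊙ mulA) ⊠ idA ⊙ EId [WA; WA] ⊠ conv mulA anti_rev ⊙ comulAA).
Proof.
  unfold diagram_eq; cbv -[run].
  rw_at (eq_sym comul_counit_r) 0 0.
  rw_at (eq_sym comul_counit_r) 1 2.
  rw_at (braid_natural_r GCounit WA) 3 1.
  rw_at (eq_sym mul_unit_r) 7 0.
  rw_at (eq_sym (interchange (GBraid WA WA) GCounit [])) 2 1.
  rw_at (eq_sym (interchange GCounit GCounit [])) 3 2.
  rw_at (interchange GAnti GUnit []) 6 0.
  rw_at (interchange GMul GUnit []) 5 0.
  rw_at (eq_sym mul_conv_anti_rev) 3 2.
  reflexivity.
Qed.

Lemma conv_reassoc_anti_mul : diagram_eq [WA; WA]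
  (mulA ⊙ (antiA ⊙ mulA) ⊠ idA ⊙ EId [WA; WA] ⊠ conv mulA anti_rev ⊙ comulAA)
  (mulA ⊙ conv (antiA ⊙ mulA) mulA ⊠ idA ⊙ EId [WA; WA] ⊠ anti_rev ⊙ comulAA).
Proof.
  unfold diagram_eq; cbv -[run].
  rw_at (eq_sym (interchange GMul GMul [])) 11 0.
  rw_at (eq_sym (interchange GAnti GMul [])) 12 0.
  rw_at (eq_sym mul_assoc) 13 0.
  rw_at (eq_sym (braid_natural_r GComul WA)) 2 1.
  rw_at (interchange GComul GComul []) 0 0.
  rw_at (eq_sym comul_coassoc) 1 0.
  rw_at (eq_sym (interchange GComul GComul [])) 0 0.
  rw_at (eq_sym (interchange GComul GComul [WA])) 1 0.
  rw_at (interchange (GBraid WA WA) GComul [WA]) 4 1.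
  rw_at (interchange (GBraid WA WA) GComul []) 3 2.
  rw_at (eq_sym comul_coassoc) 2 3.
  rw_at (interchange (GBraid WA WA) (GBraid WA WA) []) 5 1.
  rw_at (braid_natural_l GComul WA) 3 2.
  rw_at (interchange GComul GComul [WA]) 1 0.
  rw_at (interchange GComul (GBraid WA WA) []) 2 0.
  rw_at (interchange GMul (GBraid WA WA) []) 6 2.
  rw_at (interchange (GBraid WA WA) (GBraid WA WA) [WA]) 5 1.
  rw_at (interchange GComul (GBraid WA WA) []) 4 2.
  rw_at (interchange GComul (GBraid WA WA) [WA]) 3 0.
  rw_at (interchange GMul GAnti []) 7 2.
  rw_at (interchange (GBraid WA WA) GAnti [WA]) 6 1.
  rw_at (interchange GComul GAnti []) 5 2.
  rw_at (interchange GComul GAnti [WA]) 4 0.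
  rw_at (interchange GMul GAnti [WA]) 8 2.
  rw_at (interchange (GBraid WA WA) GAnti [WA; WA]) 7 1.
  rw_at (interchange GComul GAnti [WA]) 6 2.
  rw_at (interchange GComul GAnti [WA; WA]) 5 0.
  rw_at (interchange GMul GMul []) 9 2.
  rw_at (interchange (GBraid WA WA) GMul [WA]) 8 1.
  rw_at (interchange GComul GMul []) 7 2.
  rw_at (interchange GComul GMul [WA]) 6 0.
  rw_at (eq_sym (interchange GMul GMul [])) 10 0.
  rw_at (eq_sym (interchange GAnti GMul [])) 11 0.
  reflexivity.
Qed.

Lemma anti_rev_contract : diagram_eq [WA; WA]
  (mulA ⊙ conv (antiA ⊙ mulA) mulA ⊠ idA ⊙ EId [WA; WA] ⊠ anti_rev ⊙ comulAA) anti_rev.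
Proof.
  unfold diagram_eq; cbv -[run].
  rw_at anti_mul_conv_mul 7 0.
  rw_at (eq_sym (interchange GCounit GMul [WA])) 6 0.
  rw_at (eq_sym (interchange GCounit GAnti [WA; WA])) 5 0.
  rw_at (eq_sym (interchange GCounit GAnti [WA])) 4 0.
  rw_at (eq_sym (interchange GCounit (GBraid WA WA) [WA])) 3 0.
  rw_at (eq_sym (interchange GCounit (GBraid WA WA) [])) 2 0.
  rw_at (eq_sym (interchange GCounit GMul [])) 7 0.
  rw_at (eq_sym (interchange GCounit GAnti [WA])) 6 0.
  rw_at (eq_sym (interchange GCounit GAnti [])) 5 0.
  rw_at (eq_sym (interchange GCounit (GBraid WA WA) [])) 4 0.
  rw_at (eq_sym (braid_natural_l GCounit WA)) 3 0.
  rw_at mul_unit_l 8 0.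
  rw_at (interchange GComul GComul []) 0 0.
  rw_at comul_counit_l 1 0.
  rw_at comul_counit_l 0 1.
  reflexivity.
Qed.

Lemma anti_antimultiplicative : diagram_eq [WA; WA] (antiA ⊙ mulA) anti_rev.
Proof. exact (eq_trans anti_mul_expand (eq_trans conv_reassoc_anti_mul anti_rev_contract)). Qed.

Lemma comul_coconv_comul_anti : diagram_eq [WA]
  (coconv comulA (comulA ⊙ antiA)) (unitA ⊠ unitA ⊙ counitA).
Proof.
  unfold diagram_eq; cbv -[run].
  rw_at (interchange GComul GAnti []) 1 0.
  rw_at (eq_sym comul_mul) 2 0.
  rw_at antipode_r 0 0.
  rw_at comul_unit 1 0.
  reflexivity.
Qed.

Lemma coanti_rev_coconv_comul : diagram_eq [WA]
  (coconv coanti_rev comulA) (unitA ⊠ unitA ⊙ counitA).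
Proof.
  unfold diagram_eq; cbv -[run].
  rw_at comul_coassoc 0 0.
  rw_at (eq_sym (interchange GAnti GComul [])) 1 0.
  rw_at (interchange (GBraid WA WA) GComul []) 4 0.
  rw_at (interchange GAnti GComul []) 3 1.
  rw_at (eq_sym comul_coassoc) 2 1.
  rw_at (braid_natural_l GAnti WA) 4 0.
  rw_at (interchange GAnti (GBraid WA WA) []) 5 0.
  rw_at (braid_natural_l GComul WA) 3 0.
  rw_at antipode_l 4 0.
  rw_at (eq_sym (braid_natural_l GCounit WA)) 3 0.
  rw_at comul_counit_l 2 1.
  rw_at (eq_sym (interchange GUnit GAnti [])) 1 0.
  rw_at (eq_sym (interchange GUnit GComul [])) 0 0.
  rw_at antipode_l 1 1.
  rw_at (interchange GUnit GCounit []) 0 0.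
  reflexivity.
Qed.

Lemma comul_anti_expand : diagram_eq [WA] (comulA ⊙ antiA)
  (mulAA ⊙ coconv coanti_rev comulA ⊠ EId [WA; WA] ⊙ idA ⊠ (comulA ⊙ antiA) ⊙ comulA).
Proof.
  unfold diagram_eq; cbv -[run].
  rw_at (eq_sym comul_counit_l) 0 0.
  rw_at (eq_sym mul_unit_l) 4 0.
  rw_at (eq_sym mul_unit_l) 6 1.
  rw_at (interchange GMul GUnit []) 5 0.
  rw_at (eq_sym (braid_natural_r GUnit WA)) 5 1.
  rw_at (interchange GCounit GAnti []) 1 0.
  rw_at (interchange GCounit GComul []) 2 0.
  rw_at (eq_sym coanti_rev_coconv_comul) 3 0.
  reflexivity.
Qed.

Lemma coconv_reassoc_comul_anti : diagram_eq [WA]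
  (mulAA ⊙ coconv coanti_rev comulA ⊠ EId [WA; WA] ⊙ idA ⊠ (comulA ⊙ antiA) ⊙ comulA)
  (mulAA ⊙ EId [WA; WA] ⊠ coconv comulA (comulA ⊙ antiA) ⊙ coanti_rev ⊠ idA ⊙ comulA).
Proof.
  unfold diagram_eq; cbv -[run].
  rw_at (eq_sym (interchange GComul GComul [])) 2 0.
  rw_at (eq_sym (interchange GComul GAnti [])) 1 0.
  rw_at comul_coassoc 0 0.
  rw_at (braid_natural_r GMul WA) 11 1.
  rw_at (interchange GMul (GBraid WA WA) [WA]) 10 0.
  rw_at (interchange GMul (GBraid WA WA) []) 11 0.
  rw_at (interchange GMul GMul [WA]) 12 0.
  rw_at mul_assoc 13 0.
  rw_at (eq_sym (interchange GMul GMul [])) 12 1.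
  rw_at (eq_sym (interchange GMul GMul [])) 13 0.
  rw_at mul_assoc 14 1.
  rw_at (interchange (GBraid WA WA) (GBraid WA WA) []) 9 1.
  rw_at (eq_sym (braid_natural_l GMul WA)) 10 1.
  rw_at (eq_sym (interchange GComul GComul [WA])) 3 0.
  rw_at (eq_sym (interchange GComul GAnti [WA])) 2 0.
  rw_at (eq_sym (interchange GComul GComul [])) 1 0.
  rw_at (eq_sym (interchange GAnti GComul [WA; WA])) 4 0.
  rw_at (eq_sym (interchange GAnti GAnti [WA; WA])) 3 0.
  rw_at (eq_sym (interchange GAnti GComul [WA])) 2 0.
  rw_at (eq_sym (interchange GAnti GComul [WA])) 5 1.
  rw_at (eq_sym (interchange GAnti GAnti [WA])) 4 1.
  rw_at (eq_sym (interchange GAnti GComul [])) 3 1.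
  rw_at (eq_sym (interchange (GBraid WA WA) GComul [WA])) 6 0.
  rw_at (eq_sym (interchange (GBraid WA WA) GAnti [WA])) 5 0.
  rw_at (eq_sym (interchange (GBraid WA WA) GComul [])) 4 0.
  rw_at (eq_sym (interchange GComul GComul [])) 7 2.
  rw_at (eq_sym (interchange GComul GAnti [])) 6 2.
  rw_at (interchange GMul GMul [WA]) 12 0.
  rw_at (interchange (GBraid WA WA) GMul []) 11 1.
  reflexivity.
Qed.

Lemma coanti_rev_contract : diagram_eq [WA]
  (mulAA ⊙ EId [WA; WA] ⊠ coconv comulA (comulA ⊙ antiA) ⊙ coanti_rev ⊠ idA ⊙ comulA) coanti_rev.
Proof.
  unfold diagram_eq; cbv -[run].
  rw_at comul_coconv_comul_anti 5 2.
  rw_at (interchange GUnit GUnit []) 6 2.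
  rw_at (braid_natural_l GUnit WA) 7 1.
  rw_at (eq_sym (interchange GUnit GUnit [WA])) 6 1.
  rw_at (eq_sym (interchange GMul GUnit [WA])) 7 0.
  rw_at mul_unit_r 8 1.
  rw_at mul_unit_r 6 0.
  rw_at (interchange (GBraid WA WA) GCounit []) 4 0.
  rw_at (interchange GAnti GCounit []) 3 1.
  rw_at (interchange GAnti GCounit [WA]) 2 0.
  rw_at (interchange GComul GCounit []) 1 0.
  rw_at comul_counit_r 0 0.
  reflexivity.
Qed.

Lemma anti_anticomultiplicative : diagram_eq [WA] (comulA ⊙ antiA) coanti_rev.
Proof.
  exact (eq_trans comul_anti_expand (eq_trans coconv_reassoc_comul_anti coanti_rev_contract)).
Qed.

(** * The square of the antipode of the cross product *)

Definition cross_antipode_expr : expr :=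
  idA ⊠ actB ⊙ brBA ⊠ idA ⊙ antiB ⊠ (comulA ⊙ antiA ⊙ mulA) ⊙ brAB ⊠ idA ⊙ idA ⊠ coactB.

Definition sigma_expr : expr := actB ⊙ idB ⊠ antiA ⊙ coactB.

Definition antipode_square_target : expr :=
  (antiA ⊙ antiA) ⊠ (antiB ⊙ antiB) ⊙ brBA ⊙ brAB ⊙ idA ⊠ sigma_expr.

(* The stages of the computation, in the notation of the header:
     sq_crossed    (S(x₂) S(d¹))₁ ⊗ (T(d⁰) ◁ x₁) ◁ (S(x₂) S(d¹))₂
     sq_expanded   S(x₂₂) S(d¹₂) ⊗ (T(d⁰) ◁ x₁) ◁ S(x₂₁) S(d¹₁)
     sq_merged     S(x₂₂) S(d¹₂) ⊗ T(d⁰) ◁ x₁ S(x₂₁) S(d¹₁)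
     sq_cancelled  S(x) S(d¹₂) ⊗ T(d⁰) ◁ S(d¹₁)
     sq_split      S²(a) S(d¹₂ S(b¹)) ⊗ T(d⁰) ◁ S(d¹₁)
     sq_reduced    S²(a) ⊗ T²(b⁰) ◁ S(b¹) *)
Definition sq_crossed : diagram :=
  [(1, GCoact); (0, GBraid WA WB); (0, GAntiB); (1, GMul); (1, GAnti); (0, GCoact);
   (2, GComul); (1, GBraid WA WA); (0, GAntiB); (0, GAct); (1, GBraid WA WA); (1, GAnti);
   (2, GAnti); (1, GMul); (1, GComul); (0, GBraid WB WA); (1, GAct)].

Definition sq_expanded : diagram :=
  [(1, GCoact); (0, GBraid WA WB); (0, GAntiB); (1, GMul); (1, GAnti); (0, GCoact);
   (2, GComul); (1, GBraid WA WA); (0, GAntiB); (0, GAct); (1, GBraid WA WA); (1, GComul);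
   (1, GAnti); (2, GAnti); (1, GBraid WA WA); (3, GComul); (3, GAnti); (4, GAnti);
   (3, GBraid WA WA); (2, GBraid WA WA); (1, GMul); (2, GMul); (0, GBraid WB WA);
   (1, GAct)].

Definition sq_merged : diagram :=
  [(1, GCoact); (0, GBraid WA WB); (0, GAntiB); (1, GMul); (1, GAnti); (0, GCoact);
   (2, GComul); (1, GBraid WA WA); (0, GAntiB); (2, GBraid WA WA); (2, GComul); (2, GAnti);
   (3, GAnti); (4, GComul); (4, GAnti); (5, GAnti); (4, GBraid WA WA); (3, GMul); (1, GMul);
   (1, GBraid WA WA); (0, GBraid WB WA); (2, GMul); (1, GAct)].

Definition sq_cancelled : diagram :=
  [(1, GCoact); (0, GBraid WA WB); (0, GAntiB); (1, GMul); (1, GAnti); (0, GCoact);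
   (0, GAntiB); (1, GBraid WA WA); (2, GComul); (2, GAnti); (3, GAnti); (2, GBraid WA WA);
   (1, GAnti); (1, GMul); (0, GBraid WB WA); (1, GAct)].

Definition sq_split : diagram :=
  [(1, GCoact); (0, GBraid WA WB); (0, GAntiB); (1, GBraid WA WA); (1, GAnti); (2, GAnti);
   (0, GCoact); (0, GAntiB); (1, GComul); (2, GMul); (1, GBraid WA WA); (2, GBraid WA WA);
   (3, GAnti); (1, GBraid WA WA); (1, GAnti); (2, GAnti); (1, GMul); (0, GBraid WB WA);
   (1, GAct)].

Definition sq_reduced : diagram :=
  [(1, GCoact); (0, GBraid WA WB); (1, GBraid WA WA); (2, GAnti); (0, GAntiB); (0, GAntiB);
   (1, GBraid WA WA); (2, GAnti); (1, GAnti); (0, GBraid WB WA); (1, GAct)].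

Lemma square_crossed_module :
  run [WA; WB] (layers (cross_antipode_expr ⊙ cross_antipode_expr)) = run [WA; WB] sq_crossed.
Proof.
  cbv -[run].
  rw_at (interchange GAntiB GMul []) 10 0.
  rw_at crossed_module_compat 5 0.
  rw_at (interchange GAct GMul []) 8 0.
  rw_at antiB_act 9 0.
  rw_at (eq_sym (interchange GAntiB GMul [WA])) 8 0.
  rw_at (eq_sym (interchange GAct GMul [])) 9 0.
  rw_at anti_antimultiplicative 10 1.
  reflexivity.
Qed.

Lemma square_expand_comul : run [WA; WB] sq_crossed = run [WA; WB] sq_expanded.
Proof.
  cbv -[run].
  rw_at comul_mul 13 1.
  rw_at (interchange GAnti GAnti []) 11 1.
  rw_at anti_anticomultiplicative 12 1.
  rw_at (eq_sym (interchange GComul GAnti [])) 11 1.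
  rw_at (eq_sym (interchange GAnti GAnti [WA])) 12 1.
  rw_at (eq_sym (interchange GAnti GAnti [])) 13 2.
  rw_at (eq_sym (interchange (GBraid WA WA) GAnti [])) 14 1.
  rw_at anti_anticomultiplicative 15 3.
  reflexivity.
Qed.

Lemma square_merge_actions : run [WA; WB] sq_expanded = run [WA; WB] sq_merged.
Proof.
  cbv -[run].
  rw_at (interchange GAct (GBraid WA WA) []) 9 0.
  rw_at (interchange GAct GComul []) 10 0.
  rw_at (interchange GAct GAnti []) 11 0.
  rw_at (interchange GAct GAnti [WA]) 12 0.
  rw_at (interchange GAct (GBraid WA WA) []) 13 0.
  rw_at (interchange GAct GComul [WA; WA]) 14 0.
  rw_at (interchange GAct GAnti [WA; WA]) 15 0.
  rw_at (interchange GAct GAnti [WA; WA; WA]) 16 0.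
  rw_at (interchange GAct (GBraid WA WA) [WA; WA]) 17 0.
  rw_at (interchange GAct (GBraid WA WA) [WA]) 18 0.
  rw_at (interchange GAct GMul []) 19 0.
  rw_at (interchange GAct GMul [WA]) 20 0.
  rw_at (braid_natural_r GAct WA) 21 0.
  rw_at act_mul 23 1.
  rw_at (interchange (GBraid WA WA) GComul []) 13 2.
  rw_at (interchange (GBraid WA WA) GAnti []) 14 2.
  rw_at (interchange (GBraid WA WA) GAnti [WA]) 15 2.
  rw_at (interchange (GBraid WA WA) (GBraid WA WA) []) 16 2.
  rw_at (eq_sym (braid_natural_l GMul WA)) 17 2.
  rw_at (eq_sym (interchange (GBraid WA WA) GMul [])) 19 1.
  rw_at (eq_sym (interchange (GBraid WB WA) GMul [WA])) 20 0.
  rw_at (eq_sym mul_assoc) 21 2.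
  rw_at (interchange (GBraid WB WA) GMul []) 20 0.
  rw_at (eq_sym (braid_natural_r GMul WA)) 18 1.
  reflexivity.
Qed.

Lemma square_cancel_antipode : run [WA; WB] sq_merged = run [WA; WB] sq_cancelled.
Proof.
  cbv -[run].
  rw_at (eq_sym (interchange GAntiB (GBraid WA WA) [])) 7 0.
  rw_at (eq_sym (interchange GAntiB GComul [WA])) 6 0.
  rw_at (braid_natural_l GComul WA) 7 1.
  rw_at (eq_sym comul_coassoc) 8 1.
  rw_at (interchange GAnti GAnti []) 10 2.
  rw_at (interchange GComul GAnti []) 9 1.
  rw_at (interchange GAnti GComul [WA]) 11 2.
  rw_at (interchange GComul GComul [WA]) 10 1.
  rw_at (interchange GAnti GAnti [WA]) 12 2.
  rw_at (interchange GComul GAnti [WA]) 11 1.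
  rw_at (interchange GAnti GAnti [WA; WA]) 13 2.
  rw_at (interchange GComul GAnti [WA; WA]) 12 1.
  rw_at (interchange GAnti (GBraid WA WA) [WA]) 14 2.
  rw_at (interchange GComul (GBraid WA WA) [WA]) 13 1.
  rw_at (interchange GAnti GMul []) 15 2.
  rw_at (interchange GComul GMul []) 14 1.
  rw_at antipode_r 15 1.
  rw_at (braid_natural_r GUnit WA) 16 1.
  rw_at (eq_sym (interchange (GBraid WB WA) GUnit [])) 16 0.
  rw_at mul_unit_l 17 2.
  rw_at (interchange GAnti GComul []) 9 2.
  rw_at (interchange GComul GComul []) 8 1.
  rw_at (interchange GAnti GAnti []) 10 2.
  rw_at (interchange GComul GAnti []) 9 1.
  rw_at (interchange GAnti GAnti [WA]) 11 2.
  rw_at (interchange GComul GAnti [WA]) 10 1.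
  rw_at (interchange GAnti (GBraid WA WA) []) 12 2.
  rw_at (interchange GComul (GBraid WA WA) []) 11 1.
  rw_at (eq_sym (interchange GCounit GMul [])) 14 1.
  rw_at (eq_sym (interchange GCounit GAnti [])) 13 1.
  rw_at comul_counit_l 12 1.
  reflexivity.
Qed.

Lemma square_split_product : run [WA; WB] sq_cancelled = run [WA; WB] sq_split.
Proof.
  cbv -[run].
  rw_at anti_antimultiplicative 3 1.
  rw_at (eq_sym (interchange GCoact GMul [])) 6 0.
  rw_at (eq_sym (interchange GAntiB GMul [WA])) 7 0.
  rw_at (braid_natural_l GMul WA) 8 1.
  rw_at (interchange GMul GComul []) 10 1.
  rw_at (interchange GMul GAnti []) 11 1.
  rw_at (interchange GMul GAnti [WA]) 12 1.
  rw_at (interchange GMul (GBraid WA WA) []) 13 1.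
  rw_at anti_antimultiplicative 14 1.
  rw_at mul_assoc 17 1.
  rw_at (eq_sym (braid_natural_r GComul WA)) 9 2.
  rw_at (eq_sym (braid_natural_r GComul WA)) 8 1.
  rw_at (braid_natural_l GAnti WA) 14 3.
  rw_at (braid_natural_r GAnti WA) 13 3.
  rw_at (eq_sym (braid_natural_r (GBraid WA WA) WA)) 11 2.
  rw_at (eq_sym (braid_natural_r (GBraid WA WA) WA)) 9 1.
  rw_at (interchange (GBraid WA WA) (GBraid WA WA) []) 11 1.
  rw_at (interchange (GBraid WA WA) GAnti []) 13 2.
  rw_at (interchange (GBraid WA WA) GAnti [WA]) 12 1.
  rw_at (eq_sym (interchange (GBraid WA WA) GAnti [])) 15 1.
  rw_at (braid_natural_r (GBraid WA WA) WA) 13 1.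
  rw_at (eq_sym (interchange GAnti GAnti [WA])) 16 1.
  rw_at (eq_sym (interchange GAnti (GBraid WA WA) [])) 15 1.
  rw_at (eq_sym (interchange GAnti GAnti [])) 17 2.
  rw_at (eq_sym anti_antimultiplicative) 16 2.
  rw_at (interchange GAnti GMul []) 15 1.
  rw_at (eq_sym (braid_natural_r GMul WA)) 13 1.
  rw_at (eq_sym (interchange GMul GAnti [WA])) 12 1.
  rw_at (eq_sym (interchange GMul (GBraid WA WA) [])) 11 1.
  rw_at (eq_sym (braid_natural_l GMul WA)) 9 1.
  reflexivity.
Qed.

Lemma square_cancel_coaction : run [WA; WB] sq_split = run [WA; WB] sq_reduced.
Proof.
  cbv -[run].
  rw_at (interchange GAntiB (GBraid WA WA) []) 2 0.
  rw_at (interchange GAntiB GAnti []) 3 0.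
  rw_at (interchange GAntiB GAnti [WA]) 4 0.
  rw_at antiB_coact 5 0.
  rw_at (eq_sym (interchange GCoact GAnti [WA])) 4 0.
  rw_at (eq_sym (interchange GCoact GAnti [])) 3 0.
  rw_at (eq_sym (interchange GCoact (GBraid WA WA) [])) 2 0.
  rw_at (eq_sym (braid_natural_l GCoact WA)) 1 0.
  rw_at coact_coassoc 0 1.
  rw_at (eq_sym (interchange (GBraid WA WB) GComul [])) 1 0.
  rw_at (braid_natural_l GComul WA) 2 1.
  rw_at (interchange GAnti GAnti []) 4 2.
  rw_at (interchange GComul GAnti []) 3 1.
  rw_at (eq_sym (interchange GAntiB GAnti [WA])) 5 0.
  rw_at (eq_sym (interchange GAntiB GComul [])) 4 0.
  rw_at (eq_sym (interchange GAntiB GAnti [WA])) 6 0.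
  rw_at (eq_sym (interchange GAntiB GComul [])) 5 0.
  rw_at (eq_sym (interchange GComul GAnti [])) 7 1.
  rw_at comul_coassoc 6 1.
  rw_at antipode_r 7 2.
  rw_at (braid_natural_l GUnit WA) 8 1.
  rw_at (interchange GUnit (GBraid WA WA) []) 8 1.
  rw_at (interchange GUnit GAnti [WA]) 9 1.
  rw_at (braid_natural_r GUnit WA) 10 1.
  rw_at (eq_sym (interchange GAnti GUnit [])) 10 1.
  rw_at anti_unit 11 2.
  rw_at mul_unit_r 11 1.
  rw_at comul_counit_r 6 1.
  reflexivity.
Qed.

Lemma square_normalize : run [WA; WB] sq_reduced = run [WA; WB] (layers antipode_square_target).
Proof.
  cbv -[run].
  rw_at (eq_sym (braid_natural_r GAnti WA)) 6 1.
  rw_at (eq_sym (interchange GAntiB GAnti [WA])) 3 0.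
  rw_at (eq_sym (interchange GAntiB (GBraid WA WA) [])) 2 0.
  rw_at (eq_sym (interchange GAntiB GAnti [WA])) 4 0.
  rw_at (eq_sym (interchange GAntiB (GBraid WA WA) [])) 3 0.
  rw_at (eq_sym (interchange GAnti GAnti [])) 5 1.
  rw_at (eq_sym (braid_natural_l GAnti WA)) 4 1.
  rw_at (braid_natural_l GAnti WA) 6 1.
  rw_at (braid_natural_l GAnti WB) 8 0.
  rw_at (braid_natural_l GAnti WB) 7 0.
  rw_at (interchange GAntiB GAnti [WA]) 3 0.
  rw_at (interchange GAntiB (GBraid WA WA) []) 4 0.
  rw_at (interchange GAntiB (GBraid WA WA) []) 5 0.
  rw_at (braid_natural_r GAntiB WA) 6 0.
  rw_at (interchange GAntiB GAnti [WA]) 2 0.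
  rw_at (interchange GAntiB (GBraid WA WA) []) 3 0.
  rw_at (interchange GAntiB (GBraid WA WA) []) 4 0.
  rw_at (braid_natural_r GAntiB WA) 5 0.
  rw_at (eq_sym (interchange GAnti GAntiB [])) 7 0.
  rw_at (eq_sym (interchange GAnti GAntiB [])) 8 0.
  rw_at (eq_sym antiB_act) 9 1.
  rw_at (eq_sym (interchange GAnti GAntiB [])) 6 0.
  rw_at (eq_sym (interchange GAnti GAntiB [])) 7 0.
  rw_at (eq_sym antiB_act) 8 1.
  rw_at (interchange GAnti GAct []) 7 0.
  rw_at (interchange GAnti GAct []) 6 0.
  rw_at (eq_sym (braid_natural_r GAct WA)) 4 0.
  rw_at (interchange (GBraid WA WB) GAnti []) 1 0.
  rw_at (eq_sym (braid_natural_l GAct WA)) 2 0.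
  reflexivity.
Qed.

Lemma antipode_square_diagram :
  diagram_eq [WA; WB] (cross_antipode_expr ⊙ cross_antipode_expr) antipode_square_target.
Proof.
  unfold diagram_eq.
  rewrite square_crossed_module, square_expand_comul, square_merge_actions,
    square_cancel_antipode, square_split_product, square_cancel_coaction.
  exact square_normalize.
Qed.

Lemma cross_antipode_square :
  cross_antipode muA deltaA act coact SA SB ∘ cross_antipode muA deltaA act coact SA SB
  = ((SA ∘ SA) ⊗ (SB ∘ SB)) ∘ braid (w b) (w a) ∘ braid (w a) (w b)
      ∘ (idm (w a) ⊗ sigmaBA act coact SA).
Proof.
  apply (Arrow_inj (x := [WA; WB]) (y := [WA; WB])).
  change (eval (cross_antipode_expr ⊙ cross_antipode_expr) = eval antipode_square_target).
  apply (eval_eq_of_diagram_eq (x := [WA; WB])); [reflexivity .. | exact antipode_square_diagram].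
Qed.

End Interpretation.

Theorem mainTheorem15 (C : BraidedCat) (a b : Ob C)
  (muA : Hom (w a ++ w a) (w a)) (etaA : Hom nil (w a))
  (deltaA : Hom (w a) (w a ++ w a)) (epsA : Hom (w a) nil) (SA : Hom (w a) (w a))
  (act : Hom (w b ++ w a) (w b)) (coact : Hom (w b) (w b ++ w a))
  (muB : Hom (w b ++ w b) (w b)) (etaB : Hom nil (w b))
  (deltaB : Hom (w b) (w b ++ w b)) (epsB : Hom (w b) nil) (SB : Hom (w b) (w b)) :
  is_braided_group muA etaA deltaA epsA SA ->
  is_braided_group_in_YD muA etaA deltaA epsA act coact muB etaB deltaB epsB SB ->
  cross_antipode muA deltaA act coact SA SB ∘ cross_antipode muA deltaA act coact SA SB
  = ((SA ∘ SA) ⊗ (SB ∘ SB)) ∘ braid (w b) (w a) ∘ braid (w a) (w b)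
      ∘ (idm (w a) ⊗ sigmaBA act coact SA).
Proof.
  intros HA HB.
  destruct HA as (? & ? & ? & ? & ? & ? & ? & ? & ? & ? & ? & ?).
  (* Of B only S_B enters, through its compatibility with the action and the
     coaction. *)
  destruct HB as ((? & _ & ? & _ & ?) & _ & _ & _ & _ & _ & _ & _ & _ & ? & ? & _).
  eapply cross_antipode_square; eassumption.
Qed.
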